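(* Let $K\subset\mathbb R^d$ be compact and let $\Delta$ be a family of Borel probability measures supported in $K$ having uniform densities. Suppose $t\in\mathbb R$ is such that for every $x\in K$ there is $\mu_x\in\Delta$ with $$\liminf_{r\to0}\frac{\log\mu_x(B(x,r))}{\log r}\le t.$$ Then $\dim_{\mathrm H}K\le t$.
   Context: Definition: for a compact set $K\subset\mathbb R^d$, a set $\Delta$ of Borel probability measures each supported in $K$ has uniform densities if for every $\epsilon>0$ there exist a set $\mathcal E$ of Borel measures on $\mathbb R^d$ with $\sum_{\nu\in\mathcal E}\nu(\mathbb R^d)<\infty$ and a constant $\eta>0$ such that for all $\mu\in\Delta$, $r\in(0,\eta)$ and $x\in K$ there is $\nu\in\mathcal E$ with $\frac{\log\nu(B(x,r))}{\log r}\le\frac{\log\mu(B(x,r))}{\log r}+\epsilon$ (equivalently $r^\epsilon\mu(B(x,r))\le\nu(B(x,r))$). *)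

From HB Require Import structures.
From mathcomp Require Import all_boot all_order all_algebra.
From mathcomp Require Import all_classical all_reals all_analysis.
Set Implicit Arguments. Unset Strict Implicit. Unset Printing Implicit Defensive.
Import Order.TTheory GRing.Theory Num.Theory.
Import numFieldNormedType.Exports.
Local Open Scope classical_set_scope.
Local Open Scope ring_scope.

Section Defs.
Variables (R : realType) (d : nat).

Definition enorm (v : 'rV[R]_d) : R := Num.sqrt (\sum_(i < d) v ord0 i ^+ 2).

Definition eball (x : 'rV[R]_d) (r : R) : set 'rV[R]_d :=
  [set y | enorm (y - x) < r].

Definition ediam (U : set 'rV[R]_d) : \bar R :=
  ereal_sup [set (enorm (x - y))%:E | x in U & y in U].

Definition borelRd : measurableType (@open 'rV[R]_d).-sigma :=
  g_sigma_algebraType (@open 'rV[R]_d).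

Definition hterm (s : R) (U : set 'rV[R]_d) : \bar R :=
  if pselect (U = set0) then 0%E else ((fine (ediam U)) `^ s)%:E.

Definition hausdorff_delta (s delta : R) (A : set 'rV[R]_d) : \bar R :=
  ereal_inf [set (\sum_(0 <= n <oo) hterm s (U n))%E |
    U in [set U : nat -> set 'rV[R]_d |
            A `<=` \bigcup_n U n /\ (forall n, (ediam (U n) <= delta%:E)%E)]].

(* s-dimensional Hausdorff measure: H^s = lim_{delta -> 0} H^s_delta
   = sup_{delta > 0} H^s_delta (monotone in delta) *)
Definition hausdorff_measure (s : R) (A : set 'rV[R]_d) : \bar R :=
  ereal_sup [set hausdorff_delta s delta A | delta in [set delta : R | 0 < delta]].

Definition hausdorff_dim (A : set 'rV[R]_d) : \bar R :=
  ereal_inf [set s%:E | s in [set s : R | 0 <= s /\ hausdorff_measure s A = 0%E]].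

Definition elog (x : \bar R) : \bar R :=
  match x with
  | r%:E => if r == 0 then -oo%E else (ln r)%:E
  | +oo%E => +oo%E
  | -oo%E => -oo%E
  end.

Definition local_ratio (mu : set borelRd -> \bar R) (x : 'rV[R]_d) (r : R)
  : \bar R := (elog (mu (eball x r)) * ((ln r)^-1)%:E)%E.

Definition lower_local_dim (mu : set borelRd -> \bar R) (x : 'rV[R]_d)
  : \bar R := limf_einf (local_ratio mu x) (0%R : R)^'+.

Definition supported_in (mu : set borelRd -> \bar R) (K : set 'rV[R]_d) :=
  mu (~` K) = 0%E.

(* uniform densities, in the form r^eps mu(B(x,r)) <= nu(B(x,r));
   the set E of measures is given as a family indexed by a choiceType I
   (E = range of the family), with \sum_{nu in E} nu(R^d) < oo *)
Definition uniform_densities (K : set 'rV[R]_d)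
    (Delta : set (probability borelRd R)) :=
  forall eps : R, 0 < eps ->
  exists (I : choiceType) (E : I -> {measure set borelRd -> \bar R}),
    (\esum_(i in [set: I]) E i [set: borelRd] < +oo)%E /\
    exists2 eta : R, 0 < eta &
      forall mu, Delta mu -> forall r : R, 0 < r < eta ->
      forall x, K x -> exists i : I,
        ((r `^ eps)%:E * mu (eball x r) <= E i (eball x r))%E.

End Defs.

From HB Require Import structures.
From mathcomp Require Import all_boot all_order all_algebra.
From mathcomp Require Import all_classical all_reals all_analysis.
From mathcomp Require Import ring lra.
Import Order.TTheory GRing.Theory Num.Theory.
Import numFieldNormedType.Exports.
Local Open Scope classical_set_scope.
Local Open Scope ring_scope.

(* Fix s > t and write s = t + 3e.  Uniform densities at exponent e give a
   family E of measures of finite total mass, and the bound on the lower local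
   dimension gives, at every x in K and arbitrarily small r, a measure mu with
   r^(t+e) < mu(B(x,r)), hence r^(t+2e) <= E_i(B(x,r)) for some i.  By
   compactness and the finite Vitali lemma, K is covered by balls B(x_j, 3r_j)
   with the B(x_j, r_j) disjoint, all r_j below rho; then
   H^s_delta(K) <= sum_j (6 sqrt(d) r_j)^s <= C rho^e sum_i E_i(R^d),
   which tends to 0 with rho.  So H^s(K) = 0 for every s > t.
   The covering uses the sup-norm balls of 'rV[R]_d: they contain the
   Euclidean balls and have Euclidean diameter at most 2 sqrt(d) r. *)

Section euclidean_norm.
Context {R : realType} {d : nat}.
Local Notation V := 'rV[R]_d.

Lemma coord_le_norm (v : V) i : `|v ord0 i| <= `|v|.
Proof.
rewrite [`|v|]mx_normrE.
exact: (le_bigmax _ (fun ij : 'I_1 * 'I_d => `|v ij.1 ij.2|) (ord0, i)).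
Qed.

Lemma coord_le_enorm (v : V) i : `|v ord0 i| <= enorm v.
Proof.
rewrite /enorm -(sqrtr_sqr (v ord0 i)) ler_sqrt; last first.
  by apply: sumr_ge0 => j _; rewrite sqr_ge0.
by rewrite (bigD1 i) //= lerDl; apply: sumr_ge0 => j _; exact: sqr_ge0.
Qed.

Lemma norm_le_enorm (v : V) : `|v| <= enorm v.
Proof.
rewrite [`|v|]mx_normrE; apply: bigmax_le; first exact: sqrtr_ge0.
by move=> [a j] _ /=; rewrite (ord1 a); exact: coord_le_enorm.
Qed.

Lemma enorm_le_norm (v : V) : enorm v <= Num.sqrt d%:R * `|v|.
Proof.
rewrite -(ger0_norm (normr_ge0 v)) -sqrtr_sqr -sqrtrM ?ler0n // ler_sqrt; last first.
  by rewrite mulr_ge0 ?ler0n ?sqr_ge0.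
have -> : d%:R * `|v| ^+ 2 = \sum_(i < d) `|v| ^+ 2 :> R.
  by rewrite sumr_const card_ord mulr_natl.
apply: ler_sum => i _; rewrite -real_normK ?num_real //.
by rewrite lerXn2r ?nnegrE ?normr_ge0 // coord_le_norm.
Qed.

Lemma enorm_continuous : continuous (@enorm R d).
Proof.
move=> v; apply: continuous_comp; last exact: sqrt_continuous.
apply: (continuous_big (op := +%R)); first exact: add_continuous.
by move=> i _ w; apply: continuousM; exact: coord_continuous.
Qed.

Lemma eball_open (x : V) r : open (eball x r).
Proof.
rewrite (_ : eball x r = (fun y => enorm (y - x)) @^-1` `]-oo, r[).
  apply: open_comp; last exact: interval_open.
  move=> y _; apply: continuous_comp; last exact: enorm_continuous.
  by apply: continuousB => //; exact: cst_continuous.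
by apply/seteqP; split => y /=; rewrite in_itv.
Qed.

Lemma eball_sub_ball (x : V) r : eball x r `<=` ball x r.
Proof.
move=> y; rewrite /eball /= -ball_normE /= distrC => h.
exact: le_lt_trans (norm_le_enorm _) h.
Qed.

Lemma ediam_ge0 (U : set V) : U !=set0 -> (0 <= ediam U)%E.
Proof.
move=> [x Ux]; apply: ereal_sup_ubound; exists x => //; exists x => //.
by rewrite subrr /enorm big1 ?sqrtr0 // => i _; rewrite mxE expr0n.
Qed.

Lemma ediam_ball_le (y : V) r : (ediam (ball y r) <= (2 * Num.sqrt d%:R * r)%:E)%E.
Proof.
apply: ge_ereal_sup => _ [a ya [b yb <-]]; rewrite lee_fin.
move: ya yb; rewrite -!ball_normE /= => ya yb.
apply: (le_trans (enorm_le_norm _)); rewrite [2 * _]mulrC -mulrA.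
apply: ler_wpM2l; first exact: sqrtr_ge0.
have -> : a - b = (a - y) + (y - b) by rewrite addrA subrK.
rewrite distrC in ya; have := ler_normD (a - y) (y - b); lra.
Qed.

Lemma hterm_ge0 s (U : set V) : (0 <= hterm s U)%E.
Proof. by rewrite /hterm; case: pselect => h //; rewrite lee_fin powR_ge0. Qed.

Lemma hterm_le s c (U : set V) : 0 <= s -> (ediam U <= c%:E)%E ->
  (hterm s U <= (c `^ s)%:E)%E.
Proof.
move=> s0; rewrite /hterm; case: pselect => [h _|U0]; first by rewrite lee_fin powR_ge0.
have /ediam_ge0 : U !=set0 by apply/set0P/eqP.
case: (ediam U) => //= x x0 xc.
by rewrite lee_fin ge0_ler_powR // nnegrE -lee_fin (le_trans x0 xc).
Qed.

Lemma hterm_ball3_le (y : V) r rho s e : 0 < r <= rho -> 0 <= s -> 0 <= e ->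
  (hterm (s + e) (ball y (3 * r)) <=
   ((6 * Num.sqrt d%:R) `^ (s + e) * rho `^ e * r `^ s)%:E)%E.
Proof.
move=> /andP[r0 rrho] s0 e0.
have c0 : 0 <= 6 * Num.sqrt d%:R :> R by rewrite mulr_ge0 ?sqrtr_ge0.
have se0 : 0 <= s + e by rewrite addr_ge0.
apply: le_trans (hterm_le _ _ _ se0 (ediam_ball_le y (3 * r))) _.
have -> : 2 * Num.sqrt d%:R * (3 * r) = 6 * Num.sqrt d%:R * r by ring.
rewrite lee_fin powRM ?(ltW r0) // -mulrA; apply: ler_wpM2l; first exact: powR_ge0.
rewrite addrC powRD ?(lt0r_neq0 r0) ?implybT //; apply: ler_wpM2r; first exact: powR_ge0.
by rewrite ge0_ler_powR ?nnegrE ?(ltW r0) ?(le_trans (ltW r0) rrho).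
Qed.

End euclidean_norm.

Section hausdorff.
Context {R : realType} {d : nat}.
Local Notation V := 'rV[R]_d.

Lemma hausdorff_delta_ge0 s delta (A : set V) : (0 <= hausdorff_delta s delta A)%E.
Proof.
apply/ereal_infP => _ [U _ <-].
by apply: nneseries_ge0 => n _ _; exact: hterm_ge0.
Qed.

Lemma hausdorff_delta_le_fin_cover s delta (A : set V) (J : eqType) (D : seq J)
    (F : J -> set V) :
  A `<=` \bigcup_(j in [set` D]) F j -> {in D, forall j, (ediam (F j) <= delta%:E)%E} ->
  (hausdorff_delta s delta A <= \sum_(j <- D) hterm s (F j))%E.
Proof.
move=> AD Fdelta; pose U n := nth set0 [seq F j | j <- D] n.
have UD : (\sum_(0 <= n <oo) hterm s (U n) = \sum_(j <- D) hterm s (F j))%E.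
  rewrite (nneseries_split 0 (size D)) => [|n _]; last exact: hterm_ge0.
  rewrite eseries0 => [|n + _]; last first.
    by rewrite /U add0n => Dn; rewrite nth_default ?size_map // /hterm; case: pselect.
  by rewrite adde0 add0n -(big_map F xpredT (hterm s)) (big_nth set0) size_map.
apply: ereal_inf_lbound; exists U => //; split => [z /AD [j Dj Fjz]|n].
  exists (index j D) => //.
  by rewrite /U (nth_map j) ?index_mem // nth_index.
rewrite /U; case: (ltnP n (size D)) => [nD|Dn]; last first.
  by rewrite nth_default ?size_map //; apply: ge_ereal_sup => _ [? []].
have [j0 _] : exists j0 : J, True by case: D {AD Fdelta UD U} nD => // j0; exists j0.
by rewrite (nth_map j0) // Fdelta // mem_nth.
Qed.

Lemma hausdorff_measure_eq0 s (A : set V) :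
  (forall delta, 0 < delta -> hausdorff_delta s delta A = 0%E) ->
  hausdorff_measure s A = 0%E.
Proof.
move=> H0; apply/eqP; rewrite eq_le; apply/andP; split.
  by apply: ge_ereal_sup => _ [delta delta0 <-]; rewrite H0.
by apply: ereal_sup_ubound; exists 1; [exact: ltr01 | exact/H0/ltr01].
Qed.

Lemma hausdorff_dim_le (A : set V) t : 0 <= t ->
  (forall s, t < s -> hausdorff_measure s A = 0%E) -> (hausdorff_dim A <= t%:E)%E.
Proof.
move=> t0 H0; apply/lee_addgt0Pr => e e0; rewrite -EFinD.
by apply: ereal_inf_lbound; exists (t + e) => //; split; [lra | apply: H0; lra].
Qed.

End hausdorff.

Lemma exists_seq_argmax {R : realDomainType} {J : eqType} (f : J -> R) {s : seq J} :
  s != [::] -> exists2 j, j \in s & {in s, forall i, f i <= f j}.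
Proof.
elim: s => [//|a [|b s] IH] _.
  by exists a; rewrite ?mem_head // => x; rewrite inE => /eqP ->.
have [j js jmax] := IH isT.
have [aj|ja] := leP (f a) (f j).
  exists j; first by rewrite inE js orbT.
  by move=> x; rewrite inE => /predU1P [->|/jmax].
exists a; first exact: mem_head.
by move=> x; rewrite inE => /predU1P [->//|/jmax xj]; exact: le_trans xj (ltW ja).
Qed.

Section vitali_finite.
Context {R : realFieldType} {T : pseudoMetricType R} {J : eqType}.
Variables (c : J -> T) (r : J -> R).
Local Notation B j := (ball (c j) (r j)).

Lemma ball_sub_ball3 i j : B i `&` B j !=set0 -> r i <= r j ->
  B i `<=` ball (c j) (3 * r j).
Proof.
move=> [w [wi wj]] rij z zi.
apply: (@le_ball _ _ _ (r j + r i + r i)); first lra.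
exact: ball_triangle (ball_triangle wj (ball_sym wi)) zi.
Qed.

Lemma vitali_finite_cover (s : seq J) : {in s, forall j, 0 < r j} ->
  exists D : seq J, [/\ uniq D, {subset D <= s}, trivIset [set` D] (fun j => B j) &
    {in s, forall i, exists2 j, j \in D & B i `<=` ball (c j) (3 * r j)}].
Proof.
move: {2}(size s) (leqnn (size s)) => n; elim: n s => [|n IH] s.
  by rewrite leqn0 => /nilP -> _; exists [::]; split => // ? ? /[!inE].
move=> sn r0; have [->|s0] := eqVneq s [::].
  by exists [::]; split => // ? ? /[!inE].
(* keep a ball of maximal radius; the balls meeting it lie in its triple *)
have [j0 j0s j0max] := exists_seq_argmax r s0.
pose far i := `[< B i `&` B j0 = set0 >].
have j0_near : ~~ far j0.
  apply/negP => /asboolP; apply/eqP/set0P; exists (c j0).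
  by split; apply: ballxx; exact: r0.
have size_far : (size [seq i <- s | far i] <= n)%N.
  rewrite -ltnS (leq_trans _ sn) // size_filter -(count_predC far s) -addn1.
  rewrite leq_add2l lt0n -lt0n -has_count; apply/hasP; exists j0 => //.
have far_pos : {in [seq i <- s | far i], forall j, 0 < r j}.
  by move=> j; rewrite mem_filter => /andP[_ /r0].
have [D [uD Ds tD covD]] := IH _ size_far far_pos.
exists (j0 :: D); split.
- by rewrite /= uD andbT; apply: contra j0_near => /Ds; rewrite mem_filter => /andP[].
- by move=> j; rewrite inE => /predU1P[->//|/Ds]; rewrite mem_filter => /andP[].
- have far_D j : j \in D -> B j `&` B j0 = set0.
    by move/Ds; rewrite mem_filter => /andP[/asboolP].
  move=> i j; rewrite /= !inE => /predU1P[->|iD] /predU1P[->|jD] //.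
  + by move/set0P; rewrite setIC far_D // eqxx.
  + by move/set0P; rewrite far_D // eqxx.
  + exact: tD.
- move=> i si; have [fi|nfi] := boolP (far i).
    have [|j jD ij] := covD i; first by rewrite mem_filter fi.
    by exists j => //; rewrite inE jD orbT.
  exists j0; first exact: mem_head.
  apply: ball_sub_ball3 (j0max _ si); apply/set0P.
  by apply: contraNN nfi => /eqP ?; exact/asboolP.
Qed.

End vitali_finite.

Section disjoint_mass.
Context {dT : measure_display} {T : measurableType dT} {R : realType} {J : choiceType}.
Variables (D : seq J) (F : J -> set T).
Hypotheses (uD : uniq D) (tD : trivIset [set` D] F)
  (mF : forall j, j \in D -> measurable (F j)).

Lemma sum_measure_disjoint_le (m : {measure set T -> \bar R}) :
  (\sum_(j <- D) m (F j) <= m setT)%E.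
Proof.
have finD : finite_set [set` D] by exact: finite_seq.
rewrite fsbig_seq // -measure_fin_bigcup //; apply: le_measure => //; rewrite inE //.
exact: fin_bigcup_measurable.
Qed.

Lemma sum_measure_family_le_esum (I : choiceType) (E : I -> {measure set T -> \bar R})
    (idx : J -> I) :
  (\sum_(j <- D) E (idx j) (F j) <= \esum_(i in [set: I]) E i [set: T])%E.
Proof.
pose Is := undup [seq idx j | j <- D].
apply: (@le_trans _ _ (\sum_(j <- D) \sum_(i <- Is) E i (F j))%E).
  rewrite big_seq [X in (_ <= X)%E]big_seq; apply: lee_sum => j jD.
  rewrite (bigD1_seq (idx j)) ?undup_uniq //=; last by rewrite mem_undup map_f.
  by apply: leeDl; apply: sume_ge0 => i _; exact: measure_ge0.
rewrite exchange_big /=.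
apply: (@le_trans _ _ (\sum_(i <- Is) E i [set: T])%E).
  by apply: lee_sum => i _; exact: sum_measure_disjoint_le.
by rewrite fsbig_seq ?undup_uniq //; apply: esum_ge; exists [set` Is].
Qed.

End disjoint_mass.

Lemma limf_einf_right_lt {R : realType} (f : R -> \bar R) (a : R) :
  (limf_einf f 0^'+ < a%:E)%E ->
  forall rho, 0 < rho -> exists r, 0 < r < rho /\ (f r < a%:E)%E.
Proof.
rewrite limf_einfE => fa rho rho0.
have near0 : 0^'+ [set r | 0 < r < rho].
  by near=> r; apply/andP; split; near: r; [exact: nbhs_right_gt | exact: nbhs_right_lt].
have : (ereal_inf (f @` [set r | (0 < r < rho)%R]) < a%:E)%E.
  by apply: le_lt_trans fa; apply: ereal_sup_ubound; exists [set r | 0 < r < rho].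
by move/ereal_inf_lt => [_ [r r0 <-] fra]; exists r.
Unshelve. all: by end_near.
Qed.

Section lower_local_dimension.
Context {R : realType} {d : nat}.
Local Notation V := 'rV[R]_d.
Local Notation T := (borelRd R d).

Lemma eball_measurable (x : V) r : measurable (eball x r : set T).
Proof. by apply: sub_sigma_algebra; exact: eball_open. Qed.

Lemma ball_measurable (x : V) r : measurable (ball x r : set T).
Proof. by apply: sub_sigma_algebra; exact: ball_open. Qed.

Lemma pow_lt_measure_eball (mu : {finite_measure set T -> \bar R}) x a r : 0 < r < 1 ->
  (local_ratio mu x r < a%:E)%E -> ((r `^ a)%:E < mu (eball x r))%E.
Proof.
move=> /andP[r0 r1]; have lnr : ln r < 0 by rewrite ln_lt0 // r0 r1.
rewrite /local_ratio.
have muB : mu (eball x r) \is a fin_num by exact: fin_num_measure (eball_measurable x r).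
rewrite -(fineK muB); set m := fine _; have m0 : 0 <= m by apply/fine_ge0/measure_ge0.
rewrite /elog; have [->|mn0] := eqVneq m 0; first by rewrite lt0_mulNye // lte_fin invr_lt0.
have mp : 0 < m by rewrite lt_neqAle eq_sym mn0.
rewrite -EFinM !lte_fin ltr_ndivrMr // => lnm.
by rewrite /powR (negbTE (lt0r_neq0 r0)) -(lnK mp) ltr_expR.
Qed.

Lemma lower_local_dim_lt (mu : {finite_measure set T -> \bar R}) x a :
  (lower_local_dim mu x < a%:E)%E ->
  forall rho, 0 < rho -> exists r, 0 < r < rho /\ ((r `^ a)%:E < mu (eball x r))%E.
Proof.
move=> mua rho rho0; have [|r [/andP[r0 rrho] ra]] :=
  limf_einf_right_lt _ _ mua (Num.min rho 1).
  by rewrite lt_min rho0 ltr01.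
move: rrho; rewrite lt_min => /andP[rrho r1].
by exists r; split; [rewrite r0 rrho | apply: pow_lt_measure_eball; rewrite ?r0].
Qed.

Lemma lower_local_dim_ge0 (mu : probability T R) x : (0 <= lower_local_dim mu x)%E.
Proof.
rewrite leNgt; apply/negP => mu0.
have [a mua a0] : exists2 a : R, (lower_local_dim mu x < a%:E)%E & a < 0.
  move: mu0; case: (lower_local_dim mu x) => [l| |] // l0.
    by exists (l / 2); rewrite ?lte_fin; move: l0; rewrite lte_fin; lra.
  by exists (-1); rewrite ?ltNyr ?oppr_lt0.
have [r [/andP[r0 r1] mur]] := lower_local_dim_lt mu _ _ mua _ ltr01.
have r_pow_ge1 : 1 <= r `^ a.
  rewrite /powR (negbTE (lt0r_neq0 r0)) -[leLHS]expR0 ler_expR.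
  by rewrite nmulr_rge0 // ln_le0 // ltW.
have := lt_le_trans mur (probability_le1 mu (eball_measurable x r)).
by rewrite lte_fin ltNge r_pow_ge1.
Qed.

End lower_local_dimension.

Section hausdorff_null.
Context {R : realType} {d : nat}.
Local Notation V := 'rV[R]_d.
Local Notation T := (borelRd R d).
Context {I : choiceType}.
Variable E : I -> {measure set T -> \bar R}.

Definition ball_mass_bound (K : set V) (rho s : R) :=
  forall x, K x -> exists r, 0 < r < rho /\ exists i, ((r `^ s)%:E <= E i (ball x r))%E.

Lemma hausdorff_delta_le_mass (K : set V) M s e rho delta :
  compact K -> 0 <= s -> 0 <= e -> 6 * Num.sqrt d%:R * rho <= delta ->
  (\esum_(i in [set: I]) E i [set: T] <= M%:E)%E -> ball_mass_bound K rho s ->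
  (hausdorff_delta (s + e) delta K <=
   ((6 * Num.sqrt d%:R) `^ (s + e) * rho `^ e * M)%:E)%E.
Proof.
move=> Kc s0 e0 rho_delta EM Kmass.
(* triples (centre, radius, index of the dominating measure) *)
pose good := [set p : V * R * I | [/\ K p.1.1, 0 < p.1.2 < rho &
  ((p.1.2 `^ s)%:E <= E p.2 (ball p.1.1 p.1.2))%E]].
have [D' D'good KD'] : finite_subset_cover good (fun p => ball p.1.1 p.1.2) K.
  move: Kc; rewrite compact_cover; apply => [p _|x Kx]; first exact: ball_open.
  have [r [r0 [i ri]]] := Kmass x Kx.
  by exists (x, r, i); [split | apply: ballxx; case/andP: r0].
have [|D [uD DD' tD covD]] :=
  vitali_finite_cover (fun p => p.1.1) (fun p => p.1.2) (finmap.enum_fset D').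
  by move=> p /D'good; rewrite inE => -[_ /andP[]].
have Dgood p : p \in D -> good p by move=> /DD' /D'good; rewrite inE.
apply: le_trans
  (hausdorff_delta_le_fin_cover _ _ _ _ D (fun p => ball p.1.1 (3 * p.1.2)) _ _) _.
- move=> x /KD' [p pD' px]; have [q qD pq] := covD p pD'.
  by exists q => //; exact: pq.
- move=> p /Dgood [_ /andP[p0 prho] _]; apply: le_trans (ediam_ball_le _ _) _.
  rewrite lee_fin; apply: le_trans rho_delta.
  by have := sqrtr_ge0 (d%:R : R); nra.
have C0 : 0 <= (6 * Num.sqrt d%:R) `^ (s + e) * rho `^ e by rewrite mulr_ge0 ?powR_ge0.
apply: (@le_trans _ _ (\sum_(p <- D)
  (((6 * Num.sqrt d%:R) `^ (s + e) * rho `^ e)%:E * E p.2 (ball p.1.1 p.1.2)))%E).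
  rewrite big_seq [X in (_ <= X)%E]big_seq.
  apply: lee_sum => p /Dgood /= [_ /andP[p0 prho] pmass].
  apply: le_trans (hterm_ball3_le _ _ rho _ _ _ s0 e0) _; first by rewrite p0 ltW.
  by rewrite EFinM lee_wpmul2l ?lee_fin.
rewrite -ge0_sume_distrr => [|p _]; last exact: measure_ge0.
have ED := sum_measure_family_le_esum D (fun p => ball p.1.1 p.1.2 : set T) uD tD
  (fun p _ => ball_measurable _ _) _ E snd.
rewrite [X in (_ <= X)%E]EFinM.
by apply: lee_wpmul2l; [rewrite lee_fin | exact: le_trans ED EM].
Qed.

Lemma hausdorff_measure_eq0_of_mass (K : set V) s e : compact K -> 0 <= s -> 0 < e ->
  (\esum_(i in [set: I]) E i [set: T] < +oo)%E ->
  (forall rho, 0 < rho -> ball_mass_bound K rho s) ->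
  hausdorff_measure (s + e) K = 0%E.
Proof.
move=> Kc s0 e0 Efin Kmass; apply: hausdorff_measure_eq0 => delta delta0.
have Esum0 : (0 <= \esum_(i in [set: I]) E i [set: T])%E by exact: esum_ge0.
pose M := fine (\esum_(i in [set: I]) E i [set: T]).
have EM : (\esum_(i in [set: I]) E i [set: T] <= M%:E)%E.
  by rewrite fineK // ge0_fin_numE.
have M0 : 0 <= M by exact: fine_ge0.
set c : R := 6 * Num.sqrt d%:R; have c0 : 0 <= c by rewrite mulr_ge0 ?sqrtr_ge0.
apply/eqP; rewrite eq_le hausdorff_delta_ge0 andbT; apply/lee_addgt0Pr => eps eps0.
have C0 : 0 < c `^ (s + e) * M + 1 by have := powR_ge0 c (s + e); nra.
pose rho := Num.min (delta / (c + 1)) ((eps / (c `^ (s + e) * M + 1)) `^ e^-1).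
have rho0 : 0 < rho by rewrite lt_min divr_gt0 ?powR_gt0 ?divr_gt0 //; lra.
apply: le_trans
  (hausdorff_delta_le_mass _ M _ _ _ _ Kc s0 (ltW e0) _ EM (Kmass rho rho0)) _.
  have : rho <= delta / (c + 1) by rewrite ge_min lexx.
  by rewrite ler_pdivlMr -/c; [have := rho0; nra | lra].
have rho_eps : rho `^ e <= eps / (c `^ (s + e) * M + 1).
  have rho_le : rho <= (eps / (c `^ (s + e) * M + 1)) `^ e^-1 by rewrite ge_min lexx orbT.
  rewrite (le_trans (ge0_ler_powR (ltW e0) _ _ rho_le)) ?nnegrE ?powR_ge0 ?(ltW rho0) //.
  by rewrite -powRrM mulVf ?gt_eqF // powRr1 // divr_ge0 // ltW.
move: rho_eps; rewrite -/c add0e lee_fin ler_pdivlMr // => rho_eps.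
by have := powR_ge0 c (s + e); have := powR_ge0 rho e; nra.
Qed.

End hausdorff_null.

Theorem propositionp (R : realType) (d : nat) (K : set 'rV[R]_d)
    (Delta : set (probability (borelRd R d) R)) (t : R) :
  compact K -> K !=set0 ->
  (forall mu, Delta mu -> supported_in mu K) ->
  uniform_densities K Delta ->
  (forall x, K x -> exists2 mu, Delta mu & (lower_local_dim mu x <= t%:E)%E) ->
  (hausdorff_dim K <= t%:E)%E.
Proof.
move=> Kc [x0 Kx0] _ Kdens Kdim.
have t0 : 0 <= t.
  have [mu _ mux0] := Kdim x0 Kx0.
  by rewrite -lee_fin (le_trans (lower_local_dim_ge0 mu x0) mux0).
apply: hausdorff_dim_le => // s ts; pose e := (s - t) / 3.
have e0 : 0 < e by rewrite divr_gt0 // subr_gt0.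
have [I [E [Efin [eta eta0 Edens]]]] := Kdens e e0.
(* one e for the factor r^e of uniform densities, one to make the bound
   t on the lower local dimension strict, one left for the covering sum *)
have -> : s = t + e + e + e by rewrite /e; field.
apply: (hausdorff_measure_eq0_of_mass E _ _ _ Kc _ e0 Efin) => [|rho rho0 x Kx]; first lra.
have [mu Dmu mux] := Kdim x Kx.
have mute : (lower_local_dim mu x < (t + e)%:E)%E.
  by apply: le_lt_trans mux _; rewrite lte_fin ltrDl.
have rho_eta0 : 0 < Num.min rho eta by rewrite lt_min rho0.
have [r [/andP[r0]]] := lower_local_dim_lt mu x (t + e) mute _ rho_eta0.
rewrite lt_min => /andP[rrho reta] mur.
have r_eta : 0 < r < eta by rewrite r0.
have [i Ei] := Edens mu Dmu r r_eta x Kx.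
exists r; split; first by rewrite r0.
exists i; rewrite (addrC (t + e)) powRD ?(lt0r_neq0 r0) ?implybT // EFinM.
apply: le_trans (le_trans (lee_wpmul2l _ (ltW mur)) Ei) _; first by rewrite lee_fin powR_ge0.
by apply: le_measure; rewrite ?inE;
  [exact: eball_measurable | exact: ball_measurable | exact: eball_sub_ball].
Qed.
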